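(* For every team $R$ of three robots, the Equivalent Oscillation problem $EqOsc$ is solvable by $R$ in the model $\mathcal{FCOM}$ under the fully synchronous scheduler with limited visibility, i.e. $EqOsc\in Task(\mathcal{FCOM}, FSYNCH, \mathcal{L.V.}; R)$.
   Context: Robots are anonymous, identical, autonomous points in the Euclidean plane. Each has its own local coordinate system, with no common chirality. Robots operate in Look-Compute-Move cycles: an instantaneous snapshot of visible robot positions and lights, a computation of a destination and light color, then a move. In $\mathcal{FCOM}$, each robot has a light with colors from a finite set, set at the end of Compute and visible only to other robots; a robot does not see its own light and is otherwise oblivious. Under the fully synchronous scheduler, all robots are activated in every round. Under limited visibility, a robot sees only robots (and their lights) within a fixed distance $V_r$ (same for all robots) of its current position, and the initial visibility graph (robots adjacent iff they see each other) is connected. Problem Equivalent Oscillation ($EqOsc$): three robots $r_1,r_2,r_3$ are initially at collinear points $B,A,C$ respectively, with $AB=AC=d$. Let $B',C'$ be the points on this line (on segments $AB$, $AC$) with $AB'=AC'=\frac{2d}{3}$. The robots $r_1$ and $r_3$ must always be equidistant from $r_2$ (which is at $A$). They must also oscillate: if at some round $t$, $r_1,r_3$ are at $B,C$, then at some round $t'>t$ they are at $B',C'$; and if at round $t'$ they are at $B',C'$, then at some round $t''>t'$ they are at $B,C$. *)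

From Stdlib Require Import Reals List Relations.
Open Scope R_scope.

Definition point : Type := (R * R)%type.

Definition edist (p q : point) : R :=
  sqrt ((fst p - fst q) ^ 2 + (snd p - snd q) ^ 2).

Definition collinear (p q r : point) : Prop :=
  (fst q - fst p) * (snd r - snd p) - (snd q - snd p) * (fst r - fst p) = 0.

Definition lerp (a b : point) (k : R) : point :=
  (fst a + k * (fst b - fst a), snd a + k * (snd b - snd a)).

(* the team: three anonymous robots; the names are only used by the
   specification, never given to the algorithm *)
Inductive robot : Type := r1 | r2 | r3.

(* A local coordinate system of a robot: unit of length (scale > 0),
   orientation (angle) and handedness (refl = true: opposite chirality).
   Its origin is the robot's current position. *)
Record frame : Type := Frame { fr_scale : R; fr_angle : R; fr_refl : bool }.
Definition valid_frame (f : frame) : Prop := 0 < fr_scale f.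

Definition to_local (f : frame) (o x : point) : point :=
  let vx := fst x - fst o in
  let vy := snd x - snd o in
  let c := cos (fr_angle f) in
  let s := sin (fr_angle f) in
  let wx := (c * vx + s * vy) / fr_scale f in
  let wy := (- s * vx + c * vy) / fr_scale f in
  if fr_refl f then (wx, - wy) else (wx, wy).

Definition to_global (f : frame) (o p : point) : point :=
  let u := if fr_refl f then (fst p, - snd p) else p in
  let c := cos (fr_angle f) in
  let s := sin (fr_angle f) in
  (fst o + fr_scale f * (c * fst u - s * snd u),
   snd o + fr_scale f * (s * fst u + c * snd u)).

(* A snapshot (Look phase): the set of (local position, light colour) of the
   other robots within visibility range.  The robot's own light is not seen;
   robots are anonymous (a set, no identities). *)
Definition snapshot (Col : Type) : Type := point * Col -> Prop.

(* An FCOM algorithm (Compute phase): destination in local coordinates and new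
   colour of the robot's light; otherwise oblivious. *)
Definition algorithm (Col : Type) : Type := snapshot Col -> point * Col.

Definition config (Col : Type) : Type := ((robot -> point) * (robot -> Col))%type.

Definition snap {Col : Type} (Vr : R) (fr : robot -> frame) (cf : config Col)
  (i : robot) : snapshot Col :=
  fun pc => exists j, j <> i /\ edist (fst cf i) (fst cf j) <= Vr /\
     fst pc = to_local (fr i) (fst cf i) (fst cf j) /\ snd pc = snd cf j.

(* one fully synchronous round: every robot is activated, moves rigidly to its
   destination, and sets its light *)
Definition step {Col : Type} (alg : algorithm Col) (Vr : R)
  (fr : robot -> frame) (cf : config Col) : config Col :=
  (fun i => to_global (fr i) (fst cf i) (fst (alg (snap Vr fr cf i))),
   fun i => snd (alg (snap Vr fr cf i))).

Fixpoint exec {Col : Type} (alg : algorithm Col) (Vr : R) (fr : robot -> frame)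
  (init : config Col) (t : nat) : config Col :=
  match t with
  | O => init
  | S t' => step alg Vr fr (exec alg Vr fr init t')
  end.

Definition visible (Vr : R) (pos : robot -> point) (i j : robot) : Prop :=
  i <> j /\ edist (pos i) (pos j) <= Vr.

Definition vis_connected (Vr : R) (pos : robot -> point) : Prop :=
  forall i j, clos_refl_trans robot (visible Vr pos) i j.

(* the EqOsc specification for the run pos, started with r1,r2,r3 at Bp,Ap,Cp *)
Definition eqosc_ok (Ap Bp Cp : point) (pos : nat -> robot -> point) : Prop :=
  let Bp' := lerp Ap Bp (2 / 3) in
  let Cp' := lerp Ap Cp (2 / 3) in
  (forall t, pos t r2 = Ap /\ edist (pos t r1) (pos t r2) = edist (pos t r3) (pos t r2)) /\
  (forall t, pos t r1 = Bp /\ pos t r3 = Cp ->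
     exists t', (t < t')%nat /\ pos t' r1 = Bp' /\ pos t' r3 = Cp') /\
  (forall t, pos t r1 = Bp' /\ pos t r3 = Cp' ->
     exists t', (t < t')%nat /\ pos t' r1 = Bp /\ pos t' r3 = Cp).

(* Put robot i at A + x_i (B - A), with x = (s, 0, -s) and amplitude s = 1 or 2/3.  A robot
   perceives its neighbours only through their positions in its own frame, but every destination the
   algorithm computes is a multiple of an observed relative position, so it does not depend on the unit,
   orientation or chirality of the frame.  An end robot sees the centre at some q <> 0 (and maybe
   the other end at 2q), whereas the centre sees its two neighbours at p and -p.  All lights start
   equal and every robot toggles its light each round, so the common light tells the end robots
   the phase: lit, they are at B and C and move by q/3 to B' and C'; unlit, they are at B' and C'
   and move by -q/2 back to B and C.  The centre never moves.  Neighbours stay within distance d,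
   and the initial connectivity gives d <= Vr because any two robots start at least d apart. *)

From Stdlib Require Import Reals List Relations Lra ClassicalEpsilon.
Open Scope R_scope.

Definition scl (k : R) (p : point) : point := (k * fst p, k * snd p).

Lemma scl_scl k l p : scl k (scl l p) = scl (k * l) p.
Proof. unfold scl; simpl; f_equal; ring. Qed.

Lemma scl_neq0 k p : k <> 0 -> p <> (0, 0) -> scl k p <> (0, 0).
Proof.
  intros Hk Hp E; apply Hp; destruct p as [x y]; unfold scl in E; simpl in E.
  injection E as Ex Ey.
  apply Rmult_integral in Ex as [|Ex]; [contradiction|].
  apply Rmult_integral in Ey as [|Ey]; [contradiction|].
  now rewrite Ex, Ey.
Qed.

Lemma lerp_0 A B : lerp A B 0 = A.
Proof. destruct A; unfold lerp; simpl; f_equal; ring. Qed.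

Lemma lerp_1 A B : lerp A B 1 = B.
Proof. destruct B; unfold lerp; simpl; f_equal; ring. Qed.

Lemma lerp_lerp A B k l : lerp A (lerp A B k) l = lerp A B (k * l).
Proof. unfold lerp; simpl; f_equal; ring. Qed.

Lemma lerp_inj A B k l : A <> B -> lerp A B k = lerp A B l -> k = l.
Proof.
  destruct A as [a1 a2], B as [b1 b2]; unfold lerp; simpl; intros HAB E.
  injection E as E1 E2.
  assert (F1 : (k - l) * (b1 - a1) = 0) by (rewrite Rmult_minus_distr_r; lra).
  assert (F2 : (k - l) * (b2 - a2) = 0) by (rewrite Rmult_minus_distr_r; lra).
  apply Rmult_integral in F1 as [|F1]; [lra|].
  apply Rmult_integral in F2 as [|F2]; [lra|].
  exfalso; apply HAB; f_equal; lra.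
Qed.

Lemma edist_nonneg P Q : 0 <= edist P Q.
Proof. apply sqrt_pos. Qed.

Lemma edist_lerp_lerp A B k l :
  edist (lerp A B k) (lerp A B l) = Rabs (k - l) * edist A B.
Proof.
  unfold edist, lerp; simpl.
  replace (_ + _) with (Rsqr (k - l) * ((fst A - fst B) ^ 2 + (snd A - snd B) ^ 2))
    by (unfold Rsqr; ring).
  rewrite sqrt_mult_alt, sqrt_Rsqr_abs by apply Rle_0_sqr.
  reflexivity.
Qed.

Lemma vis_connected_le Vr pos m : vis_connected Vr pos ->
  (forall i j, i <> j -> m <= edist (pos i) (pos j)) -> m <= Vr.
Proof.
  intros Hconn Hsep.
  pose proof (clos_rt_rt1n _ _ _ _ (Hconn r1 r2)) as Hpath.
  inversion Hpath as [| j ? [Hne Hvis] _].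
  exact (Rle_trans _ _ _ (Hsep r1 j Hne) Hvis).
Qed.

Lemma reflection_of_equidistant A B C :
  collinear B A C -> edist A B = edist A C -> B <> C -> C = lerp A B (-1).
Proof.
  destruct A as [a1 a2], B as [b1 b2], C as [c1 c2].
  unfold collinear, edist, lerp; simpl; intros Hcol Hd HBC.
  apply sqrt_inj in Hd; try (apply Rplus_le_le_0_compat; apply pow2_ge_0).
  set (u1 := b1 - a1) in *; set (u2 := b2 - a2) in *.
  set (v1 := c1 - a1) in *; set (v2 := c2 - a2) in *.
  (* v - u and v + u are orthogonal (|u| = |v|) and parallel (collinearity),
     so one of them vanishes *)
  assert (Hdot : (v1 - u1) * (v1 + u1) + (v2 - u2) * (v2 + u2) = 0).
  { transitivity (((a1 - c1) ^ 2 + (a2 - c2) ^ 2) - ((a1 - b1) ^ 2 + (a2 - b2) ^ 2));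
      [unfold u1, u2, v1, v2; ring | lra]. }
  assert (Hcross : (v1 - u1) * (v2 + u2) - (v2 - u2) * (v1 + u1) = 0).
  { transitivity (2 * ((a1 - b1) * (c2 - b2) - (a2 - b2) * (c1 - b1)));
      [unfold u1, u2, v1, v2; ring | rewrite Hcol; ring]. }
  assert (Hprod : (Rsqr (v1 - u1) + Rsqr (v2 - u2)) * (Rsqr (v1 + u1) + Rsqr (v2 + u2)) = 0).
  { transitivity (Rsqr ((v1 - u1) * (v1 + u1) + (v2 - u2) * (v2 + u2))
                  + Rsqr ((v1 - u1) * (v2 + u2) - (v2 - u2) * (v1 + u1)));
      [unfold Rsqr; ring | rewrite Hdot, Hcross; unfold Rsqr; ring]. }
  apply Rmult_integral in Hprod as [Hdiff | Hsum].
  - apply Rplus_sqr_eq_0 in Hdiff as [H1 H2].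
    exfalso; apply HBC; unfold u1, u2, v1, v2 in H1, H2; f_equal; lra.
  - apply Rplus_sqr_eq_0 in Hsum as [H1 H2].
    unfold u1, u2, v1, v2 in *; f_equal; lra.
Qed.

Lemma to_local_lerp_lerp f A B k l :
  to_local f (lerp A B k) (lerp A B l) = scl (l - k) (to_local f A B).
Proof.
  destruct f as [sc an []]; unfold to_local, lerp, scl; simpl; f_equal; unfold Rdiv; ring.
Qed.

Lemma to_global_lerp f A B k m : valid_frame f ->
  to_global f (lerp A B k) (scl m (to_local f A B)) = lerp A B (k + m).
Proof.
  destruct f as [sc an rf]; unfold valid_frame; simpl; intro Hsc.
  assert (Hcos : cos an ^ 2 = 1 - sin an ^ 2) by (rewrite <- (sin2_cos2 an); unfold Rsqr; ring).
  unfold to_global, to_local, lerp, scl; destruct rf; simpl; f_equal;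
    field_simplify; try lra; rewrite Hcos; ring.
Qed.

Lemma to_local_neq0 f A B : valid_frame f -> A <> B -> to_local f A B <> (0, 0).
Proof.
  intros Hf HAB Hw.
  pose proof (to_global_lerp f A B 0 0 Hf) as E0.
  pose proof (to_global_lerp f A B 0 1 Hf) as E1.
  unfold scl in E0, E1; rewrite Hw in E0, E1; simpl in E0, E1.
  rewrite !Rmult_0_r in E0, E1; rewrite E0 in E1.
  apply lerp_inj in E1; [lra | exact HAB].
Qed.

Definition sees_lit (S : snapshot bool) : bool :=
  if excluded_middle_informative (exists p, S (p, true)) then true else false.

Definition end_view (S : snapshot bool) (q : point) : Prop :=
  q <> (0, 0) /\ (exists c, S (q, c)) /\ forall p c, S (p, c) -> p = q \/ p = scl 2 q.

Definition end_factor (b : bool) : R := if b then 1 / 3 else - (1 / 2).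

Definition osc_alg : algorithm bool := fun S =>
  let b := sees_lit S in
  (if excluded_middle_informative (exists q, end_view S q)
   then scl (end_factor b) (epsilon (inhabits (0, 0)) (end_view S))
   else (0, 0),
   negb b).

Lemma sees_lit_uniform S q b :
  S (q, b) -> (forall p c, S (p, c) -> c = b) -> sees_lit S = b.
Proof.
  intros Hq Hcol; unfold sees_lit.
  destruct excluded_middle_informative as [[p Hp] | Hnone].
  - exact (Hcol _ _ Hp).
  - destruct b; [exfalso; eauto | reflexivity].
Qed.

Lemma end_view_unique S q q' : end_view S q -> end_view S q' -> q = q'.
Proof.
  destruct q as [x y], q' as [x' y'].
  intros [Hq [[c Hc] Hall]] [Hq' [[c' Hc'] Hall']].
  unfold scl in *; simpl in *.
  destruct (Hall _ _ Hc') as [E | E]; destruct (Hall' _ _ Hc) as [E' | E'];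
    injection E as E1 E2; injection E' as E1' E2';
    solve [f_equal; lra | exfalso; apply Hq; f_equal; lra].
Qed.

Lemma end_view_opposite S p c c' q :
  p <> (0, 0) -> S (p, c) -> S (scl (-1) p, c') -> ~ end_view S q.
Proof.
  destruct p as [x y], q as [u v]; intros Hp Hc Hc' [_ [_ Hall]].
  apply Hp.
  destruct (Hall _ _ Hc) as [E | E]; destruct (Hall _ _ Hc') as [E' | E'];
    unfold scl in *; simpl in *;
    injection E as E1 E2; injection E' as E1' E2'; f_equal; lra.
Qed.

Lemma osc_alg_end S q b :
  q <> (0, 0) -> S (q, b) ->
  (forall p c, S (p, c) -> c = b /\ (p = q \/ p = scl 2 q)) ->
  osc_alg S = (scl (end_factor b) q, negb b).
Proof.
  intros Hq Hqb Hall.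
  assert (Hend : end_view S q).
  { split; [exact Hq | split; [exists b; exact Hqb |]].
    intros p c Hp; exact (proj2 (Hall p c Hp)). }
  unfold osc_alg.
  rewrite (sees_lit_uniform S q b Hqb) by (intros p c Hp; exact (proj1 (Hall p c Hp))).
  destruct excluded_middle_informative as [Hex | Hnone]; [| exfalso; eauto].
  rewrite (end_view_unique S _ q (epsilon_spec _ _ Hex) Hend).
  reflexivity.
Qed.

Lemma osc_alg_center S p b :
  p <> (0, 0) -> S (p, b) -> S (scl (-1) p, b) ->
  (forall p' c, S (p', c) -> c = b) ->
  osc_alg S = ((0, 0), negb b).
Proof.
  intros Hp Hpb Hpb' Hcol.
  unfold osc_alg; rewrite (sees_lit_uniform S p b Hpb Hcol).
  destruct excluded_middle_informative as [[q Hq] | _]; [| reflexivity].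
  exfalso; exact (end_view_opposite S p b b q Hp Hpb Hpb' Hq).
Qed.

Definition amplitude (b : bool) : R := if b then 1 else 2 / 3.

Definition phase_coord (b : bool) (i : robot) : R :=
  match i with r1 => amplitude b | r2 => 0 | r3 => - amplitude b end.

Definition in_phase (A B : point) (b : bool) (cf : config bool) : Prop :=
  forall i, fst cf i = lerp A B (phase_coord b i) /\ snd cf i = b.

Lemma amplitude_pos b : 0 < amplitude b <= 1.
Proof. destruct b; simpl; lra. Qed.

Lemma amplitude_inj b b' : amplitude b = amplitude b' -> b = b'.
Proof. destruct b, b'; simpl; intro; solve [reflexivity | lra]. Qed.

Lemma phase_coord_close b i j :
  (i = r2 \/ j = r2) -> Rabs (phase_coord b j - phase_coord b i) <= 1.
Proof.
  pose proof (amplitude_pos b).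
  intros [-> | ->]; destruct i || destruct j; simpl; unfold Rabs;
    destruct Rcase_abs; lra.
Qed.

Lemma phase_coord_apart i j : i <> j ->
  1 <= Rabs (phase_coord true i - phase_coord true j).
Proof.
  intros Hij; destruct i, j; try congruence; simpl; unfold Rabs;
    destruct Rcase_abs; lra.
Qed.

Lemma in_phase_edist A B b cf i j : in_phase A B b cf ->
  edist (fst cf i) (fst cf j) = Rabs (phase_coord b i - phase_coord b j) * edist A B.
Proof.
  intros Hph; rewrite (proj1 (Hph i)), (proj1 (Hph j)); apply edist_lerp_lerp.
Qed.

Lemma in_phase_connected_le Vr A B cf :
  vis_connected Vr (fst cf) -> in_phase A B true cf -> edist A B <= Vr.
Proof.
  intros Hconn Hph; apply (vis_connected_le Vr (fst cf) _ Hconn); intros i j Hij.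
  rewrite (in_phase_edist A B true cf i j Hph).
  pose proof (phase_coord_apart i j Hij); pose proof (edist_nonneg A B); nra.
Qed.

Section Round.

Variables (Vr : R) (fr : robot -> frame) (A B : point).
Hypothesis valid_fr : forall i, valid_frame (fr i).
Hypothesis A_neq_B : A <> B.
Hypothesis AB_visible : edist A B <= Vr.

Lemma snap_in_phase_inv b cf i p c : in_phase A B b cf -> snap Vr fr cf i (p, c) ->
  c = b /\ exists j, j <> i /\
    p = scl (phase_coord b j - phase_coord b i) (to_local (fr i) A B).
Proof.
  intros Hph [j [Hji [_ [Hp Hc]]]]; simpl in Hp, Hc.
  destruct (Hph i) as [Ei _], (Hph j) as [Ej Lj].
  split; [congruence|].
  exists j; split; [exact Hji|].
  rewrite Hp, Ei, Ej; apply to_local_lerp_lerp.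
Qed.

Lemma snap_in_phase_neighbor b cf i j : in_phase A B b cf -> j <> i ->
  (i = r2 \/ j = r2) ->
  snap Vr fr cf i (scl (phase_coord b j - phase_coord b i) (to_local (fr i) A B), b).
Proof.
  intros Hph Hji Hadj.
  destruct (Hph i) as [Ei _], (Hph j) as [Ej Lj].
  exists j; repeat split; simpl; [exact Hji | | | symmetry; exact Lj].
  - rewrite (in_phase_edist A B b cf i j Hph), Rabs_minus_sym.
    apply Rle_trans with (1 * edist A B); [| lra].
    apply Rmult_le_compat_r; [apply edist_nonneg | apply phase_coord_close; exact Hadj].
  - rewrite Ei, Ej; symmetry; apply to_local_lerp_lerp.
Qed.

Lemma osc_alg_in_phase b cf i : in_phase A B b cf ->
  osc_alg (snap Vr fr cf i) =
  (scl (phase_coord (negb b) i - phase_coord b i) (to_local (fr i) A B), negb b).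
Proof.
  intros Hph.
  pose proof (amplitude_pos b) as Hamp.
  assert (Hw : to_local (fr i) A B <> (0, 0)) by (apply to_local_neq0; auto).
  set (w := to_local (fr i) A B) in *.
  assert (Hsnap : forall p c, snap Vr fr cf i (p, c) ->
            c = b /\ exists j, j <> i /\ p = scl (phase_coord b j - phase_coord b i) w)
    by (intros p c; apply snap_in_phase_inv; exact Hph).
  destruct i.
  - rewrite (osc_alg_end _ (scl (phase_coord b r2 - phase_coord b r1) w) b).
    + rewrite scl_scl; do 2 f_equal; destruct b; simpl; lra.
    + apply scl_neq0; [simpl; lra | exact Hw].
    + apply snap_in_phase_neighbor; auto; discriminate.
    + intros p c Hp; destruct (Hsnap p c Hp) as [-> [j [Hj ->]]]; split; [reflexivity|].
      destruct j; [congruence | left; reflexivity | right].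
      rewrite scl_scl; f_equal; simpl; ring.
  - rewrite (osc_alg_center _ (scl (phase_coord b r1 - phase_coord b r2) w) b).
    + unfold scl; simpl; rewrite Rminus_0_r, !Rmult_0_l; reflexivity.
    + apply scl_neq0; [simpl; lra | exact Hw].
    + apply snap_in_phase_neighbor; auto; discriminate.
    + replace (scl (-1) _) with (scl (phase_coord b r3 - phase_coord b r2) w)
        by (rewrite scl_scl; f_equal; simpl; ring).
      apply snap_in_phase_neighbor; auto; discriminate.
    + intros p c Hp; exact (proj1 (Hsnap p c Hp)).
  - rewrite (osc_alg_end _ (scl (phase_coord b r2 - phase_coord b r3) w) b).
    + rewrite scl_scl; do 2 f_equal; destruct b; simpl; lra.
    + apply scl_neq0; [simpl; lra | exact Hw].
    + apply snap_in_phase_neighbor; auto; discriminate.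
    + intros p c Hp; destruct (Hsnap p c Hp) as [-> [j [Hj ->]]]; split; [reflexivity|].
      destruct j; [right | left; reflexivity | congruence].
      rewrite scl_scl; f_equal; simpl; ring.
Qed.

Lemma step_in_phase b cf : in_phase A B b cf ->
  in_phase A B (negb b) (step osc_alg Vr fr cf).
Proof.
  intros Hph i; unfold step; cbn [fst snd].
  rewrite (osc_alg_in_phase b cf i Hph); cbn [fst snd].
  rewrite (proj1 (Hph i)), to_global_lerp by auto.
  split; [f_equal; ring | reflexivity].
Qed.

Lemma exec_in_phase init t : in_phase A B true init ->
  in_phase A B (Nat.even t) (exec osc_alg Vr fr init t).
Proof.
  intros Hinit; induction t as [| t IH]; [exact Hinit|].
  simpl exec; rewrite Nat.even_succ, <- Nat.negb_even.
  exact (step_in_phase _ _ IH).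
Qed.

Lemma exec_next_phase init t b : in_phase A B true init ->
  fst (exec osc_alg Vr fr init t) r1 = lerp A B (amplitude b) ->
  fst (exec osc_alg Vr fr init (S t)) r1 = lerp A B (amplitude (negb b)) /\
  fst (exec osc_alg Vr fr init (S t)) r3 = lerp A (lerp A B (-1)) (amplitude (negb b)).
Proof.
  intros Hinit Hr1.
  assert (Hb : Nat.even t = b).
  { apply amplitude_inj, (lerp_inj A B _ _ A_neq_B).
    rewrite <- Hr1; symmetry; exact (proj1 (exec_in_phase init t Hinit r1)). }
  pose proof (exec_in_phase init (S t) Hinit) as Hph.
  rewrite Nat.even_succ, <- Nat.negb_even, Hb in Hph.
  split; [exact (proj1 (Hph r1)) |].
  rewrite (proj1 (Hph r3)), lerp_lerp; f_equal; simpl; ring.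
Qed.

End Round.

Theorem lemma5 :
  exists (Col : Type) (colors : list Col), (forall c : Col, In c colors) /\
  exists (c0 : Col) (alg : algorithm Col),
  forall (Vr d : R) (Ap Bp Cp : point) (fr : robot -> frame),
    0 < d -> Bp <> Cp -> collinear Bp Ap Cp ->
    edist Ap Bp = d -> edist Ap Cp = d ->
    (forall i, valid_frame (fr i)) ->
    let init : config Col :=
      (fun i => match i with r1 => Bp | r2 => Ap | r3 => Cp end, fun _ => c0) in
    vis_connected Vr (fst init) ->
    eqosc_ok Ap Bp Cp (fun t => fst (exec alg Vr fr init t)).
Proof.
  exists bool, (true :: false :: nil); split; [intros []; simpl; auto |].
  exists true, osc_alg.
  intros Vr d A B C fr Hd HBC Hcol HAB HAC Hfr init Hconn.
  assert (HC : C = lerp A B (-1)) by (apply reflection_of_equidistant; congruence).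
  subst C.
  assert (HAneB : A <> B).
  { intros <-; rewrite <- (lerp_0 A A), edist_lerp_lerp, Rminus_0_r, Rabs_R0 in HAB. lra. }
  assert (Hinit : in_phase A B true init).
  { intros []; split; try reflexivity; symmetry; [apply lerp_1 | apply lerp_0]. }
  pose proof (in_phase_connected_le Vr A B init Hconn Hinit) as HV.
  pose proof (exec_in_phase Vr fr A B Hfr HAneB HV init) as Hrun.
  pose proof (exec_next_phase Vr fr A B Hfr HAneB HV init) as Hnext.
  unfold eqosc_ok; cbv beta zeta; split; [| split].
  - intros t; pose proof (Hrun t Hinit) as Hph; split.
    + rewrite (proj1 (Hph r2)); apply lerp_0.
    + rewrite !(in_phase_edist A B _ _ _ _ Hph); simpl.
      rewrite !Rminus_0_r, Rabs_Ropp; reflexivity.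
  - intros t [H1 _]; exists (S t); split; [apply Nat.lt_succ_diag_r |].
    apply (Hnext t true Hinit); rewrite H1; symmetry; apply lerp_1.
  - intros t [H1 _]; exists (S t); split; [apply Nat.lt_succ_diag_r |].
    destruct (Hnext t false Hinit H1) as [E1 E3]; rewrite E1, E3; simpl.
    split; apply lerp_1.
Qed.
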